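(* Let $I$ be a finite set and let $\{g_i: i\in I\}$ be an independent set of elements of a free group $F_n$, i.e. the $g_i$ are pairwise distinct and form a free basis of the subgroup $G=\langle g_i: i\in I\rangle$. For each $i\in I$ let $G_i=\langle g_j: j\in I\setminus\{i\}\rangle$. Then the coset incidence system $\Gamma(G;(G_i)_{i\in I})$ is flag-transitive, i.e. $G$ acting by right multiplication is transitive on the set of flags of type $J$ for every $J\subseteq I$.
   Context: An incidence system is a quadruple $(X,*,t,I)$ with $X$ a set, $I$ a finite type set, $t:X\to I$ surjective, and $*$ a symmetric relation with no two elements of the same type incident. A flag is a set of pairwise incident elements; its type is the set of types of its elements. Coset incidence system: given a group $G$ and subgroups $(G_i)_{i\in I}$, $\Gamma(G;(G_i)_{i\in I})$ has as elements all right cosets $G_ig$ ($g\in G$, $i\in I$), with $t(G_ig)=i$, and $G_ig_1 * G_jg_2$ iff $G_ig_1\cap G_jg_2\neq\emptyset$ (for cosets of different types). $G$ acts on it by right multiplication, preserving types and incidence. *)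

(* The free group F_n is modelled concretely by reduced words. *)
From mathcomp Require Import all_boot.
Set Implicit Arguments. Unset Strict Implicit. Unset Printing Implicit Defensive.

(* A letter over an alphabet A: (a, true) stands for a, (a, false) for a^-1. *)
Definition linv {A : Type} (x : A * bool) : A * bool := (x.1, ~~ x.2).

Fixpoint reduced {A : eqType} (w : seq (A * bool)) : bool :=
  match w with
  | x :: ((y :: _) as w') => (y != linv x) && reduced w'
  | _ => true
  end.

Definition red_step {A : eqType} (s : seq (A * bool)) (x : A * bool) :=
  match s with
  | y :: s' => if y == linv x then s' else x :: s
  | [::] => [:: x]
  end.
Definition freduce {A : eqType} (w : seq (A * bool)) : seq (A * bool) :=
  rev (foldl red_step [::] w).

Definition fword (n : nat) := seq ('I_n * bool).
Definition in_Fn (n : nat) (w : fword n) : bool := reduced w.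
Definition fg_one (n : nat) : fword n := [::].
Definition fg_mul (n : nat) (u v : fword n) : fword n := freduce (u ++ v).
Definition fg_inv (n : nat) (w : fword n) : fword n := rev (map linv w).

Inductive gen_sub (n : nat) (S : fword n -> Prop) : fword n -> Prop :=
| gs_one : gen_sub S (fg_one n)
| gs_gen x : S x -> gen_sub S x
| gs_mul x y : gen_sub S x -> gen_sub S y -> gen_sub S (fg_mul x y)
| gs_inv x : gen_sub S x -> gen_sub S (fg_inv x).

Definition fg_eval (n : nat) (I : Type) (g : I -> fword n) (w : seq (I * bool))
  : fword n :=
  foldr (fun x acc => fg_mul (if x.2 then g x.1 else fg_inv (g x.1)) acc)
        (fg_one n) w.

Definition independent_set (n : nat) (I : finType) (g : I -> fword n) : Prop :=
  [/\ forall i, in_Fn (g i),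
      injective g &
      forall w : seq (I * bool), reduced w -> fg_eval g w = fg_one n -> w = [::]].

Definition Gsub (n : nat) (I : finType) (g : I -> fword n) : fword n -> Prop :=
  gen_sub (fun x => exists i, x = g i).
Definition Gi (n : nat) (I : finType) (g : I -> fword n) (i : I) : fword n -> Prop :=
  gen_sub (fun x => exists j, j != i /\ x = g j).

Definition rcoset (n : nat) (H : fword n -> Prop) (x : fword n) : fword n -> Prop :=
  fun y => exists h, H h /\ y = fg_mul h x.

Definition rmulset (n : nat) (C : fword n -> Prop) (x : fword n) : fword n -> Prop :=
  fun z => exists y, C y /\ z = fg_mul y x.

(* A flag of type J in Gamma(G; (G_i)_i): for each j in J a coset G_j (c j)
   with c j in G, these cosets pairwise incident (nonempty intersection).
   (Since elements of equal type are never incident, a flag has at most one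
   element of each type, so it is given by one coset per type in J.) *)
Definition is_flag (n : nat) (I : finType) (g : I -> fword n) (J : {set I})
    (c : I -> fword n) : Prop :=
  (forall j, j \in J -> Gsub g (c j)) /\
  (forall j k, j \in J -> k \in J -> j != k ->
     exists y, rcoset (Gi g j) (c j) y /\ rcoset (Gi g k) (c k) y).

Definition flag_transitive (n : nat) (I : finType) (g : I -> fword n) : Prop :=
  forall (J : {set I}) (c1 c2 : I -> fword n),
    is_flag g J c1 -> is_flag g J c2 ->
    exists x, Gsub g x /\
      forall j, j \in J -> forall y,
        rmulset (rcoset (Gi g j) (c1 j)) x y <-> rcoset (Gi g j) (c2 j) y.

From mathcomp Require Import all_boot zify.
Set Implicit Arguments. Unset Strict Implicit. Unset Printing Implicit Defensive.

(* Since the g_i form a free basis, evaluation identifies G with the free group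
   of reduced words over I, and G_j with the words avoiding the letter j.  The
   coset G_j a of a reduced word a is then determined by the j-tail of a, its
   suffix starting at the first occurrence of j.  If the cosets G_j c_j of a
   flag pairwise meet, any two of these tails are suffixes of one common word,
   hence the longest tail t (say the m-tail of c_m) has as its own j-tail the
   j-tail of (the word of) c_j, for every j.  So every flag is the flag of cosets G_j t, and
   right multiplication by t^-1 t' carries the flag based at t to the flag
   based at t'. *)

Section FreeReduction.

Variable A : eqType.
Implicit Types (x y : A * bool) (s u v w : seq (A * bool)).

Definition winv w := rev (map linv w).

Lemma linvK x : linv (linv x) = x.
Proof. by case: x => a b; rewrite /linv /= negbK. Qed.

Lemma eq_linv_sym x y : (y == linv x) = (x == linv y).
Proof. by apply/eqP/eqP => ->; rewrite linvK. Qed.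

Lemma winvK w : winv (winv w) = w.
Proof.
rewrite /winv map_rev revK -map_comp.
by elim: w => [|x w IH] //=; rewrite IH linvK.
Qed.

Lemma winv_cons x w : winv (x :: w) = rcons (winv w) (linv x).
Proof. by rewrite /winv /= rev_cons. Qed.

Lemma reduced_cons x w :
  reduced (x :: w) = (if w is y :: _ then y != linv x else true) && reduced w.
Proof. by case: w. Qed.

Lemma reduced_rcons2 u x y :
  reduced (rcons (rcons u x) y) = reduced (rcons u x) && (y != linv x).
Proof.
elim: u => [|z u IH]; first by rewrite /= andbT.
rewrite !rcons_cons reduced_cons [in RHS]reduced_cons IH.
by case: u IH => [|v u] IH /=; rewrite ?andbT ?andbA.
Qed.

Lemma reduced_rev w : reduced (rev w) = reduced w.
Proof.
elim: w => [|x w IH] //; rewrite rev_cons reduced_cons.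
case: w IH => [|y w] IH //=.
by rewrite rev_cons reduced_rcons2 -rev_cons IH /= eq_linv_sym andbC.
Qed.

Lemma reduced_catr u v : reduced (u ++ v) -> reduced v.
Proof.
elim: u => [|x u IH] // H; apply: IH.
by move: H; rewrite cat_cons reduced_cons => /andP [].
Qed.

Lemma reduced_catl u v : reduced (u ++ v) -> reduced u.
Proof.
move=> H; rewrite -reduced_rev; apply: (@reduced_catr (rev v)).
by rewrite -rev_cat reduced_rev.
Qed.

Lemma reduced_map_linv w : reduced (map linv w) = reduced w.
Proof.
elim: w => [|x w IH] //; rewrite map_cons reduced_cons [in RHS]reduced_cons IH.
case: w {IH} => [|y w] //=; congr (~~ _ && _).
by apply/eqP/eqP => [E|->] //; rewrite -[y]linvK E linvK.
Qed.

Lemma reduced_winv w : reduced (winv w) = reduced w.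
Proof. by rewrite /winv reduced_rev reduced_map_linv. Qed.

Lemma reduced_red_step s x : reduced s -> reduced (red_step s x).
Proof.
case: s => [|y s] // Hs; rewrite /red_step.
case: ifP => E; first by move: Hs; rewrite reduced_cons => /andP [].
by rewrite reduced_cons E Hs.
Qed.

Lemma reduced_foldl_red_step s w : reduced s -> reduced (foldl red_step s w).
Proof. by elim: w s => [|x w IH] s //= Hs; apply/IH/reduced_red_step. Qed.

Lemma reduced_freduce w : reduced (freduce w).
Proof. by rewrite /freduce reduced_rev; apply: reduced_foldl_red_step. Qed.

(* The stack [s] holds the reduced prefix read so far, in reverse order. *)
Lemma foldl_red_step_reduced s w :
  reduced (rev s ++ w) -> foldl red_step s w = rev w ++ s.
Proof.
elim: w s => [|x w IH] s /=; first by rewrite cats0.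
move=> H; have -> : red_step s x = x :: s.
  case: s H => [|y s] //= H.
  have : reduced (rcons (rcons (rev s) y) x).
    by apply: (@reduced_catl _ w); rewrite cat_rcons -rev_cons.
  by rewrite reduced_rcons2 eq_linv_sym => /andP [_ /negbTE ->].
by rewrite IH rev_cons cat_rcons.
Qed.

Lemma freduce_id w : reduced w -> freduce w = w.
Proof. by move=> H; rewrite /freduce foldl_red_step_reduced ?cats0 ?revK. Qed.

Lemma foldl_red_step_rev s : reduced s -> foldl red_step [::] (rev s) = s.
Proof. by move=> Hs; rewrite foldl_red_step_reduced ?revK ?cats0 //= reduced_rev. Qed.

Lemma red_stepK s x : reduced s -> red_step (red_step s x) (linv x) = s.
Proof.
case: s => [|y s] /= Hs; first by rewrite linvK eqxx.
case: ifP => [/eqP Ey|_]; last by rewrite /red_step linvK eqxx.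
rewrite Ey in Hs *; case: s Hs => [|z s] //= /andP [/negbTE -> _].
by [].
Qed.

Lemma red_stepVK s x : reduced s -> red_step (red_step s (linv x)) x = s.
Proof. by move=> Hs; have := red_stepK (linv x) Hs; rewrite linvK. Qed.

Lemma foldl_red_step_freduce s w :
  reduced s -> foldl red_step s (freduce w) = foldl red_step s w.
Proof.
move=> Hs; elim/last_ind: w => [|w x IH] //.
rewrite /freduce foldl_rcons [in RHS]foldl_rcons -IH /freduce.
case: (foldl red_step [::] w) => [|y t] //=.
case: ifP => [/eqP ->|_]; last by rewrite rev_cons foldl_rcons.
by rewrite [in RHS]rev_cons foldl_rcons red_stepVK // reduced_foldl_red_step.
Qed.

Lemma freduce_catl u v : freduce (freduce u ++ v) = freduce (u ++ v).
Proof.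
rewrite {1}/freduce /freduce !foldl_cat foldl_red_step_rev //.
exact: reduced_foldl_red_step.
Qed.

Lemma freduce_catr u v : freduce (u ++ freduce v) = freduce (u ++ v).
Proof.
rewrite /freduce !foldl_cat -/(freduce v) foldl_red_step_freduce //.
exact: reduced_foldl_red_step.
Qed.

Lemma freduce_cat_winv w : freduce (w ++ winv w) = [::].
Proof.
rewrite /freduce; suff -> : forall s, reduced s -> foldl red_step s (w ++ winv w) = s by [].
elim: w => [|x w IH] s Hs //=.
by rewrite winv_cons -rcons_cat foldl_rcons IH ?red_stepK // reduced_red_step.
Qed.

Lemma freduce_cancel u w v : freduce (u ++ w ++ winv w ++ v) = freduce (u ++ v).
Proof.
have Ev : freduce (w ++ winv w ++ v) = freduce v.
  by rewrite catA -freduce_catl freduce_cat_winv.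
by rewrite -[LHS]freduce_catr Ev freduce_catr.
Qed.

Lemma freduce_cancelV u w v : freduce (u ++ winv w ++ w ++ v) = freduce (u ++ v).
Proof. by rewrite -{2}(winvK w) freduce_cancel. Qed.

Lemma freduce_winv_cat w : freduce (winv w ++ w) = [::].
Proof. by rewrite -{2}(winvK w) freduce_cat_winv. Qed.

Lemma freduce_cat_eq0 u v :
  reduced u -> reduced v -> freduce (u ++ v) = [::] -> v = winv u.
Proof.
move=> Ru Rv Euv.
rewrite -(freduce_id Rv) -[v]cat0s -(freduce_cancelV [::] u) /=.
by rewrite -freduce_catr Euv cats0 freduce_id ?reduced_winv.
Qed.

Lemma all_freduce (p : pred (A * bool)) w : all p w -> all p (freduce w).
Proof.
rewrite /freduce all_rev; elim: w [::] (isT : all p [::]) => [|x w IH] s //= ps.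
case/andP=> px pw; apply: IH pw; case: s ps => [|y s] /=; first by rewrite px.
by case: ifP => _ /andP [py ps] /=; rewrite ?px ?py ?ps.
Qed.

End FreeReduction.

Lemma find_drop (T : Type) (p : pred T) n s :
  n <= find p s -> find p (drop n s) = find p s - n.
Proof.
elim: s n => [|x s IH] [|n] //; rewrite ?drop0 ?subn0 //=.
by case: (p x) => //= /IH.
Qed.

Section Tails.

Variable I : eqType.
Implicit Types (j k : I) (a b h u v w : seq (I * bool)).

Definition jpos j w := find (fun x => x.1 == j) w.
Definition jtail j w := drop (jpos j w) w.
Definition avoids j w := all (fun x => x.1 != j) w.

Lemma avoids_cat j u v : avoids j (u ++ v) = avoids j u && avoids j v.
Proof. exact: all_cat. Qed.

Lemma avoids_winv j w : avoids j (winv w) = avoids j w.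
Proof. by rewrite /avoids /winv all_rev all_map. Qed.

Lemma cat_take_jtail j w : take (jpos j w) w ++ jtail j w = w.
Proof. exact: cat_take_drop. Qed.

Lemma avoids_take_jpos j w : avoids j (take (jpos j w) w).
Proof. by elim: w => [|x w IH] //=; rewrite /jpos /=; case: ifP => //= ->. Qed.

Lemma jtail_head j w : if jtail j w is x :: _ then x.1 == j else true.
Proof. by rewrite /jtail /jpos; elim: w => [|x w IH] //=; case: ifP. Qed.

Lemma jpos_jtail j w : jpos j (jtail j w) = 0.
Proof. by have := jtail_head j w; rewrite /jpos; case: (jtail j w) => //= x _ ->. Qed.

Lemma jpos_cat_avoids j h w : avoids j h -> jpos j (h ++ w) = size h + jpos j w.
Proof. by elim: h => [|x h IH] //= /andP [/negbTE xj /IH]; rewrite /jpos /= xj => ->. Qed.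

Lemma jtail_cat_avoids j h w : avoids j h -> jtail j (h ++ jtail j w) = jtail j w.
Proof. by move=> hj; rewrite /jtail jpos_cat_avoids // jpos_jtail addn0 drop_size_cat. Qed.

Lemma jtail_jtail j k w :
  size (jtail j w) <= size (jtail k w) -> jtail j (jtail k w) = jtail j w.
Proof.
rewrite /jtail /jpos !size_drop.
set pj := find _ w; set pk := find _ w => le_pjk.
have pj_le : pj <= size w by apply: find_size.
have pk_le : pk <= size w by apply: find_size.
have pkj : pk <= pj by lia.
by rewrite find_drop // drop_drop subnK.
Qed.

Lemma reduced_jtail j w : reduced w -> reduced (jtail j w).
Proof. by rewrite -{1}(cat_take_jtail j w); apply: reduced_catr. Qed.

Lemma reduced_cat_jtail j h w :
  reduced h -> avoids j h -> reduced w -> reduced (h ++ jtail j w).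
Proof.
move=> + + /(reduced_jtail j); have := jtail_head j w.
move: (jtail j w) => t t_head + + Rt.
elim: h => [|x h IH] //; rewrite cat_cons !reduced_cons /avoids /= -/(avoids j h).
move=> /andP [hx Rh] /andP [xj hj]; rewrite IH // andbT.
case: h {IH hj Rh} hx => [|y h] //= _; case: t t_head {Rt} => [|y t] //= /eqP yj.
by rewrite -yj in xj; apply: contra xj => /eqP ->.
Qed.

Lemma jtail_freduce_avoids j h a :
  avoids j h -> reduced a -> jtail j (freduce (h ++ a)) = jtail j a.
Proof.
move=> hj Ra; rewrite -{1}(cat_take_jtail j a) catA -freduce_catl.
have hj' : avoids j (freduce (h ++ take (jpos j a) a)).
  by apply: all_freduce; rewrite -/(avoids j _) avoids_cat hj avoids_take_jpos.
by rewrite freduce_id ?jtail_cat_avoids // reduced_cat_jtail // reduced_freduce.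
Qed.

Lemma jtail_eq_freduce j a b :
  reduced b -> jtail j a = jtail j b -> exists h, avoids j h /\ freduce (h ++ a) = b.
Proof.
move=> Rb Eab; exists (take (jpos j b) b ++ winv (take (jpos j a) a)); split.
  by rewrite avoids_cat avoids_winv !avoids_take_jpos.
rewrite [X in freduce (_ ++ X)](esym (cat_take_jtail j a)) -catA freduce_cancelV.
by rewrite Eab cat_take_jtail freduce_id.
Qed.

End Tails.

Lemma fg_mulA n (u v w : fword n) : fg_mul (fg_mul u v) w = fg_mul u (fg_mul v w).
Proof. by rewrite /fg_mul freduce_catl freduce_catr catA. Qed.

Lemma fg_mulKV n (u v : fword n) : reduced v -> fg_mul u (fg_mul (fg_inv u) v) = v.
Proof. by move=> Rv; rewrite /fg_mul freduce_catr -[u ++ _]cat0s freduce_cancel freduce_id. Qed.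

Lemma rmulset_rcoset n (H : fword n -> Prop) (a x y : fword n) :
  rmulset (rcoset H a) x y <-> rcoset H (fg_mul a x) y.
Proof.
split=> [[_ [[h [Hh ->]] ->]] | [h [Hh ->]]]; first by exists h; rewrite fg_mulA.
by exists (fg_mul h a); split; [exists h | rewrite fg_mulA].
Qed.

Section Evaluation.

Variables (n : nat) (I : finType) (g : I -> fword n).
Implicit Types (u v w : seq (I * bool)).

Definition eval_letter (x : I * bool) : fword n :=
  if x.2 then g x.1 else winv (g x.1).

Lemma fg_eval_cons x w : fg_eval g (x :: w) = freduce (eval_letter x ++ fg_eval g w).
Proof. by []. Qed.

Lemma reduced_fg_eval w : reduced (fg_eval g w).
Proof. by case: w => [|x w] //; rewrite fg_eval_cons reduced_freduce. Qed.

Lemma fg_eval_cat u v : fg_eval g (u ++ v) = freduce (fg_eval g u ++ fg_eval g v).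
Proof.
elim: u => [|x u IH]; first by rewrite freduce_id // reduced_fg_eval.
by rewrite cat_cons !fg_eval_cons IH freduce_catr freduce_catl catA.
Qed.

Lemma fg_eval_linv_cons x w : fg_eval g (linv x :: x :: w) = fg_eval g w.
Proof.
rewrite !fg_eval_cons freduce_catr /eval_letter /=.
have Rw := reduced_fg_eval w.
by case: x.2; rewrite /= -[_ ++ _]cat0s ?freduce_cancel ?freduce_cancelV freduce_id.
Qed.

Lemma fg_eval_freduce w : fg_eval g (freduce w) = fg_eval g w.
Proof.
rewrite /freduce; suff -> : forall s, fg_eval g (rev (foldl red_step s w)) = fg_eval g (rev s ++ w).
  by [].
elim: w => [|x w IH] s /=; first by rewrite cats0.
rewrite IH; case: s => [|y s] //=.
case: ifP => [/eqP ->|_]; last by rewrite rev_cons cat_rcons.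
by rewrite rev_cons cat_rcons !fg_eval_cat fg_eval_linv_cons.
Qed.

Lemma fg_eval_winv w : fg_eval g (winv w) = winv (fg_eval g w).
Proof.
apply: freduce_cat_eq0; rewrite ?reduced_fg_eval //.
by rewrite -fg_eval_cat -fg_eval_freduce freduce_cat_winv.
Qed.

Lemma fg_eval_inj :
  (forall w, reduced w -> fg_eval g w = fg_one n -> w = [::]) ->
  forall u v, reduced u -> reduced v -> fg_eval g u = fg_eval g v -> u = v.
Proof.
move=> free u v Ru Rv Euv; rewrite -[u]winvK; apply/esym/freduce_cat_eq0; rewrite ?reduced_winv //.
apply: free; first exact: reduced_freduce.
by rewrite fg_eval_freduce fg_eval_cat fg_eval_winv Euv freduce_winv_cat.
Qed.

Hypothesis g_reduced : forall i, reduced (g i).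

Lemma gen_subP (P : pred I) (S : fword n -> Prop) y :
  (forall x, S x <-> exists i, P i /\ x = g i) ->
  gen_sub S y <-> exists w, all (fun x => P x.1) w /\ y = fg_eval g w.
Proof.
move=> S_gen; split.
  elim=> [|_ /S_gen [i [Pi ->]]|_ _ _ [u [Pu ->]] _ [v [Pv ->]]|_ _ [w [Pw ->]]].
  - by exists [::].
  - exists [:: (i, true)]; split; first by rewrite /= Pi.
    by rewrite fg_eval_cons cats0 freduce_id ?g_reduced.
  - by exists (u ++ v); rewrite all_cat Pu Pv fg_eval_cat.
  - exists (winv w); split; last by rewrite fg_eval_winv.
    by rewrite /winv all_rev all_map; apply: sub_all Pw.
case=> w [+ ->]; elim: w => [_|x w IH]; first exact: gs_one.
case/andP=> Px Pw; rewrite fg_eval_cons; apply: gs_mul (IH Pw).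
by rewrite /eval_letter; case: x.2; [|apply: gs_inv]; apply/gs_gen/S_gen; exists x.1.
Qed.

Lemma GsubP y : Gsub g y <-> exists w, y = fg_eval g w.
Proof.
rewrite /Gsub (@gen_subP predT) => [|x]; last by split=> [[i ->]|[i [_ ->]]]; exists i.
by split=> [[w [_ ->]]|[w ->]]; exists w; split => //; apply/allP.
Qed.

Lemma GiP j y : Gi g j y <-> exists w, avoids j w /\ y = fg_eval g w.
Proof. exact: (@gen_subP (fun i => i != j)). Qed.

Lemma rcoset_GiP j a y : reduced a ->
  rcoset (Gi g j) (fg_eval g a) y <->
  exists b, [/\ reduced b, y = fg_eval g b & jtail j b = jtail j a].
Proof.
move=> Ra; split=> [[_ [/GiP [h [hj ->]] ->]] | [b [Rb -> /esym Eab]]].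
  exists (freduce (h ++ a)); rewrite reduced_freduce fg_eval_freduce fg_eval_cat.
  by rewrite jtail_freduce_avoids.
have [h [hj <-]] := jtail_eq_freduce Rb Eab.
exists (fg_eval g h); split; first by apply/GiP; exists h.
by rewrite fg_eval_freduce fg_eval_cat.
Qed.

Lemma rcoset_Gi_jtail j a a' y : reduced a -> reduced a' -> jtail j a = jtail j a' ->
  rcoset (Gi g j) (fg_eval g a) y <-> rcoset (Gi g j) (fg_eval g a') y.
Proof. by move=> Ra Ra' Eaa'; rewrite !rcoset_GiP // Eaa'. Qed.

End Evaluation.

Lemma flag_based n (I : finType) (g : I -> fword n) (J : {set I}) (c : I -> fword n) :
  independent_set g -> is_flag g J c ->
  exists z, [/\ Gsub g z, reduced z &
    forall j, j \in J -> forall y, rcoset (Gi g j) (c j) y <-> rcoset (Gi g j) z y].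
Proof.
move=> [g_red _ g_free] [Gc incident].
have [a Ha] : exists a, forall j, j \in J -> reduced (a j) /\ c j = fg_eval g (a j).
  apply: (@fin_all_exists _ _ (fun j a => j \in J -> reduced a /\ c j = fg_eval g a)) => j.
  case: (boolP (j \in J)) => [/Gc/(GsubP g_red)[w ->]|_].
    by exists (freduce w) => _; rewrite reduced_freduce fg_eval_freduce.
  by exists [::].
case: (pickP (mem J)) => [j0 Jj0 | J0]; last first.
  by exists [::]; split=> [||j Jj]; [exact: gs_one | | move: (J0 j); rewrite /= Jj].
have [m Jm m_max] := arg_maxnP (fun j => size (jtail j (a j))) Jj0.
have [Ram Ecm] := Ha m Jm.
exists (fg_eval g (jtail m (a m))); split.
- by apply/(GsubP g_red); eexists.
- exact: reduced_fg_eval.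
move=> j Jj y; have [Raj Ecj] := Ha j Jj; rewrite Ecj.
apply: rcoset_Gi_jtail; rewrite ?reduced_jtail //.
have [b [Rb Ebj Ebm]] :
    exists b, [/\ reduced b, jtail j b = jtail j (a j) & jtail m b = jtail m (a m)].
  have [->|neq_jm] := eqVneq j m; first by exists (a m).
  have [y0 [] ] := incident j m Jj Jm neq_jm; rewrite Ecj Ecm.
  move=> /(rcoset_GiP g_red _ _ Raj) [b [Rb Eb Ebj]].
  move=> /(rcoset_GiP g_red _ _ Ram) [b' [Rb' Eb' Ebm]].
  have Ebb' : b = b' by apply: fg_eval_inj g_free _ _ Rb Rb' _; rewrite -Eb -Eb'.
  by subst b'; exists b.
by rewrite -Ebj -Ebm jtail_jtail // Ebj Ebm; apply: m_max.
Qed.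

Theorem mainTheorem7 (n : nat) (I : finType) (g : I -> fword n) :
  independent_set g -> flag_transitive g.
Proof.
move=> indep J c1 c2 F1 F2.
have [z1 [Gz1 _ E1]] := flag_based indep F1.
have [z2 [Gz2 Rz2 E2]] := flag_based indep F2.
pose x := fg_mul (fg_inv z1) z2.
have Ez : fg_mul z1 x = z2 := fg_mulKV z1 Rz2.
exists x; split; first exact/gs_mul/Gz2/gs_inv.
move=> j Jj y; rewrite (E2 j Jj) -Ez -rmulset_rcoset.
by split=> [] [y' [/(E1 j Jj) Hy' ->]]; exists y'.
Qed.
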